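(* Suppose Assumption A2 holds and $F^*>-\infty$. Then Algorithm (2-RCD), with the pair $\{i_k,j_k\}$ drawn i.i.d. uniformly among the $N(N-1)/2$ unordered pairs of distinct indices, generates a sequence $x^k$ satisfying, for all $k\ge0$, $$\min_{0\le l\le k}E\left[\left(M_2(x^l,\Gamma)\right)^2\right]\le\frac{N\,(F(x^0)-F^* )}{k+1}.$$
   Context: Block structure: $n=\sum_{i=1}^N n_i$ with $N\ge2$, $I_n=[U_1\ \dots\ U_N]$, $x_i=U_i^Tx$, $\nabla_if(x)=U_i^T\nabla f(x)$, $a_i=U_i^Ta$; for $i\ne j$, $s_{ij}=[s_i^T\ s_j^T]^T$, $\nabla_{ij}f(x)=[\nabla_if(x)^T\ \nabla_jf(x)^T]^T$, and $x+s_{ij}$ means $x+U_is_i+U_js_j$. Problem: $F^*=\min\{F(x):=f(x)+h(x):\ a^Tx=b\}$ with $a\in\mathbb{R}^n$ nonzero. Assumption A2: (i) $f$ is differentiable and there are constants $L_{ij}=L_{ji}>0$ with $\|\nabla_{ij}f(x+U_is_i+U_js_j)-\nabla_{ij}f(x)\|\le L_{ij}\|s_{ij}\|$ for all $s_{ij}$, $x$, $i,j=1,\dots,N$; (ii) $h$ is proper, convex, continuous, $h(x)=\sum_{i=1}^n h_i(x_i)$ with each $h_i:\mathbb{R}\to\mathbb{R}$ convex. Algorithm (2-RCD): given $x^0$ with $a^Tx^0=b$, for $k\ge0$ choose randomly a pair $(i_k,j_k)$, $i_k\ne j_k$, compute $d_{i_kj_k}=\arg\min\{ f(x^k)+\langle\nabla_{i_kj_k}f(x^k),s_{i_kj_k}\rangle+\frac{L_{i_kj_k}}{2}\|s_{i_kj_k}\|^2+h(x^k+s_{i_kj_k})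 :\ a_{i_k}^Ts_{i_k}+a_{j_k}^Ts_{j_k}=0\}$, and set $x^{k+1}=x^k+U_{i_k}d_{i_k}+U_{j_k}d_{j_k}$. Notation: $\Gamma_i=\frac1N\sum_{j=1}^N L_{ij}$. For $\Lambda\in\mathbb{R}^N$ with positive entries, $\|x\|_\Lambda=(\sum_i\Lambda_i\|x_i\|^2)^{1/2}$, $\|y\|_\Lambda^*=(\sum_i\Lambda_i^{-1}\|y_i\|^2)^{1/2}$, $D_\Lambda=\mathrm{diag}(\Lambda_1I_{n_1},\dots,\Lambda_NI_{n_N})$, $S=\{s:a^Ts=0\}$, $d_\Lambda(x)=\arg\min_{s\in S} f(x)+\langle\nabla f(x),s\rangle+\frac12\|s\|_\Lambda^2+h(x+s)$. Optimality measure: $M_2(x,\Gamma)=\|D_\Gamma\,d_{N\Gamma}(x)\|_\Gamma^*$. *)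

From Stdlib Require Import Reals.
From mathcomp Require Import all_boot.
Set Implicit Arguments. Unset Strict Implicit. Unset Printing Implicit Defensive.
Open Scope R_scope.

Definition sumI (m : nat) (F : 'I_m -> R) : R := \big[Rplus/0]_(i < m) F i.
Definition sumS {T : Type} (s : seq T) (F : T -> R) : R := \big[Rplus/0]_(p <- s) F p.

(* Block-structured vectors of R^n, n = sum_i n_i: x_i = U_i^T x is [x i],
   a vector of R^{n_i}; the scalar coordinates are x i l, l < n_i. *)
Definition vec (N : nat) (ns : 'I_N -> nat) := forall i : 'I_N, 'I_(ns i) -> R.

Section V.
Variables (N : nat) (ns : 'I_N -> nat).
Local Notation V := (vec ns).

Definition vadd (x y : V) : V := fun i l => x i l + y i l.
Definition vsub (x y : V) : V := fun i l => x i l - y i l.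
Definition inner (x y : V) : R := sumI (fun i => sumI (fun l : 'I_(ns i) => x i l * y i l)).
Definition blocknorm2 (x : V) (i : 'I_N) : R := sumI (fun l : 'I_(ns i) => x i l * x i l).
Definition enorm (x : V) : R := sqrt (sumI (fun i => blocknorm2 x i)).
Definition pairnorm2 (i j : 'I_N) (x : V) : R :=
  sumI (fun k => if (k == i) || (k == j) then blocknorm2 x k else 0).
Definition supported2 (i j : 'I_N) (s : V) : Prop :=
  forall k : 'I_N, ~~ ((k == i) || (k == j)) -> forall l, s k l = 0.
Definition normL (Lam : 'I_N -> R) (x : V) : R :=
  sqrt (sumI (fun i => Lam i * blocknorm2 x i)).
Definition dnormL (Lam : 'I_N -> R) (y : V) : R :=
  sqrt (sumI (fun i => / Lam i * blocknorm2 y i)).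
Definition Dmul (Lam : 'I_N -> R) (y : V) : V := fun i l => Lam i * y i l.

Definition is_gradient (f : V -> R) (g : V -> V) : Prop :=
  forall x eps, 0 < eps -> exists delta, 0 < delta /\
    forall hv : V, enorm hv < delta ->
      Rabs (f (vadd x hv) - f x - inner (g x) hv) <= eps * enorm hv.

Definition IsArgmin (P : V -> Prop) (phi : V -> R) (s : V) : Prop :=
  P s /\ forall t, P t -> phi s <= phi t.

Definition rcd_obj (f h : V -> R) (g : V -> V) (L : 'I_N -> 'I_N -> R)
  (x : V) (i j : 'I_N) (s : V) : R :=
  f x + inner (g x) s + L i j / 2 * pairnorm2 i j s + h (vadd x s).
Definition rcd_feas (a : V) (i j : 'I_N) (s : V) : Prop :=
  supported2 i j s /\ inner a s = 0.

Definition dL_obj (f h : V -> R) (g : V -> V) (Lam : 'I_N -> R) (x : V) (s : V) : R :=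
  f x + inner (g x) s + / 2 * (normL Lam s * normL Lam s) + h (vadd x s).

Definition Gam (L : 'I_N -> 'I_N -> R) (i : 'I_N) : R :=
  / INR N * sumI (fun j => L i j).

Definition rcd_step (dp : V -> 'I_N -> 'I_N -> V) (x : V) (p : 'I_N * 'I_N) : V :=
  vadd x (dp x p.1 p.2).
Fixpoint rcd_run (dp : V -> 'I_N -> 'I_N -> V) (x : V) (s : seq ('I_N * 'I_N)) : V :=
  match s with [::] => x | p :: s' => rcd_run dp (rcd_step dp x p) s' end.
End V.

(* The N(N-1)/2 unordered pairs {i,j}, i<>j, represented as (i,j) with i<j. *)
Definition upairs (N : nat) : seq ('I_N * 'I_N) :=
  [seq (i, j) | i : 'I_N <- enum 'I_N, j : 'I_N <- [seq j <- enum 'I_N | (nat_of_ord i < nat_of_ord j)%N]].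

(* Expectation of X(p_0,...,p_{l-1}) when p_0,...,p_{l-1} are i.i.d. uniform
   on the finite list ps. *)
Fixpoint Expect {T : Type} (ps : seq T) (l : nat) (X : seq T -> R) : R :=
  match l with
  | O => X [::]
  | S l' => / INR (size ps) * sumS ps (fun p => Expect ps l' (fun s => X (p :: s)))
  end.

Fixpoint min_upto (k : nat) (u : nat -> R) : R :=
  match k with O => u O | S k' => Rmin (min_upto k' u) (u k) end.

Definition convexR (phi : R -> R) : Prop :=
  forall u v t, 0 <= t <= 1 -> phi (t * u + (1 - t) * v) <= t * phi u + (1 - t) * phi v.

(* Writing F = f + h, d := d_{N Gamma}(x) and x^+ for one iterate of 2-RCD
   from x, the proof rests on the one-step decrease
       M_2(x, Gamma)^2 <= N (F(x) - E[F(x^+)]),                       ( * )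
   from which the theorem follows by taking expectations along the
   trajectory, telescoping, and bounding E[F(x^k)] below by F^*.
   The estimate ( * ) combines four facts, proved in this order:
   - a descent lemma f(x+s) <= f(x) + <g x, s> + L_ij/2 ||s_ij||^2 for s
     supported on two blocks, from the mean value theorem and the pairwise
     Lipschitz property of the gradient;
   - the optimality of d: comparing d with the feasible directions t d,
     <g x, d> + h(x+d) - h(x) <= -(1+t)/2 ||d||^2_{N Gamma} for 0 <= t < 1;
   - a decomposition of the feasible d into feasible two-block directions
     lam_ij d_i + lam_ji d_j with weights in [0,1] and sum_{j<>i} lam_ij = 1,
     which bounds each 2-RCD subproblem by a convex combination;
   - averaging over the N(N-1)/2 unordered pairs. *)

From HB Require Import structures.
From Stdlib Require Import Reals Lra Psatz FunctionalExtensionality.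
From mathcomp Require Import all_boot.
Set Implicit Arguments. Unset Strict Implicit. Unset Printing Implicit Defensive.
Open Scope R_scope.

Lemma Rplus_associative : associative Rplus. Proof. by move=> *; ring. Qed.
HB.instance Definition _ :=
  Monoid.isComLaw.Build R 0 Rplus Rplus_associative Rplus_comm Rplus_0_l.

Section RealSums.
Variables (I : Type) (r : seq I) (P : pred I).

Lemma big_scal c (F : I -> R) :
  \big[Rplus/0]_(i <- r | P i) (c * F i) = c * \big[Rplus/0]_(i <- r | P i) F i.
Proof. by elim/big_rec2: _ => [|i y1 y2 _ ->]; ring. Qed.

Lemma big_sub (F G : I -> R) :
  \big[Rplus/0]_(i <- r | P i) (F i - G i) =
  \big[Rplus/0]_(i <- r | P i) F i - \big[Rplus/0]_(i <- r | P i) G i.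
Proof. by elim/big_rec3: _ => [|i y1 y2 y3 _ ->]; ring. Qed.

Lemma big_le (F G : I -> R) : (forall i, P i -> F i <= G i) ->
  \big[Rplus/0]_(i <- r | P i) F i <= \big[Rplus/0]_(i <- r | P i) G i.
Proof. by move=> H; elim/big_ind2: _ => // *; lra. Qed.

Lemma big_cst c : \big[Rplus/0]_(i <- r) c = INR (size r) * c.
Proof.
elim: r => [|x s IH]; first by rewrite big_nil /=; ring.
rewrite big_cons IH.
change (size (x :: s)) with (size s).+1; rewrite S_INR; ring.
Qed.
End RealSums.

Lemma sumI_const m c : sumI (fun _ : 'I_m => c) = INR m * c.
Proof. by rewrite /sumI big_const_ord -(size_enum_ord m) -big_cst big_const_seq count_predT. Qed.




Lemma sumI_ge0 m (F : 'I_m -> R) : (forall k, 0 <= F k) -> 0 <= sumI F.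
Proof. by move=> H; rewrite /sumI; elim/big_ind: _ => // *; lra. Qed.

Lemma sumI_ge_term m (F : 'I_m -> R) i : (forall k, 0 <= F k) -> F i <= sumI F.
Proof.
move=> H; rewrite /sumI (bigD1 i) //=.
have : 0 <= \big[Rplus/0]_(k < m | k != i) F k by elim/big_ind: _ => // *; lra.
set rest := bigop _ _ _; lra.
Qed.

Lemma sumI_divr m (F : 'I_m -> R) c : sumI (fun j => F j / c) = sumI F / c.
Proof. by rewrite /Rdiv Rmult_comm /sumI -big_scal; apply: eq_bigr => j _; ring. Qed.

Lemma sumI_but m (i : 'I_m) (F : 'I_m -> R) :
  sumI (fun j => if i == j then 0 else F j) = sumI F - F i.
Proof.
rewrite /sumI (bigD1 i) //= eqxx [in RHS](bigD1 i) //= Rplus_0_l.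
rewrite (eq_bigr F) ?Rplus_minus_l // => j.
by rewrite eq_sym => /negbTE ->.
Qed.

Lemma sumI_two m (i j : 'I_m) (u v : 'I_m -> R) : i != j ->
  sumI (fun k => if k == i then u k else if k == j then v k else 0) = u i + v j.
Proof.
move=> ij; rewrite /sumI (bigD1 i) //= eqxx (bigD1 j) /=; last by rewrite eq_sym.
rewrite eqxx eq_sym (negbTE ij) big1; first ring.
by move=> k /andP [ki kj]; rewrite (negbTE ki) (negbTE kj).
Qed.

Section BlockVectors.
Variables (N : nat) (ns : 'I_N -> nat).
Local Notation V := (vec ns).

Definition bscale (tau : 'I_N -> R) (d : V) : V := fun k l => tau k * d k l.
Definition scale (t : R) (s : V) : V := bscale (fun _ => t) s.

Definition binner (u d : V) (k : 'I_N) : R := sumI (fun l : 'I_(ns k) => u k l * d k l).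

Lemma vec_ext (x y : V) : (forall i l, x i l = y i l) -> x = y.
Proof.
move=> H; apply: functional_extensionality_dep => i.
by apply: functional_extensionality_dep => l; exact: H.
Qed.

Lemma blocknorm2_ge0 (x : V) i : 0 <= blocknorm2 x i.
Proof. by apply: sumI_ge0 => l; nra. Qed.

Lemma pairnorm2_ge0 (x : V) i j : 0 <= pairnorm2 i j x.
Proof. by apply: sumI_ge0 => k; case: ifP => _; [exact: blocknorm2_ge0 | lra]. Qed.

Lemma blocknorm2_bscale (d : V) tau k :
  blocknorm2 (bscale tau d) k = tau k * tau k * blocknorm2 d k.
Proof. by rewrite /blocknorm2 /sumI -big_scal; apply: eq_bigr => l _; rewrite /bscale; ring. Qed.

Lemma blocknorm2_scale (s : V) c k : blocknorm2 (scale c s) k = c * c * blocknorm2 s k.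
Proof. exact: blocknorm2_bscale. Qed.

Lemma pairnorm2_scale (s : V) i j c : pairnorm2 i j (scale c s) = c * c * pairnorm2 i j s.
Proof.
rewrite /pairnorm2 /sumI -big_scal; apply: eq_bigr => k _.
by case: ifP => _; rewrite ?blocknorm2_scale; ring.
Qed.

Lemma inner_scale (u s : V) t : inner u (scale t s) = t * inner u s.
Proof.
rewrite /inner /sumI -big_scal; apply: eq_bigr => i _; rewrite -big_scal.
by apply: eq_bigr => l _; rewrite /scale /bscale; ring.
Qed.

Lemma inner_vsub (u v s : V) : inner (vsub u v) s = inner u s - inner v s.
Proof.
rewrite /inner /sumI -big_sub; apply: eq_bigr => i _; rewrite -big_sub.
by apply: eq_bigr => l _; rewrite /vsub; ring.
Qed.

Lemma inner_vadd (u x s : V) : inner u (vadd x s) = inner u x + inner u s.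
Proof.
rewrite /inner /sumI -big_split; apply: eq_bigr => i _; rewrite -big_split.
by apply: eq_bigr => l _; rewrite /vadd /=; ring.
Qed.

Lemma enorm_scale (s : V) t : enorm (scale t s) = Rabs t * enorm s.
Proof.
rewrite /enorm (_ : sumI _ = t * t * sumI (fun i => blocknorm2 s i)); last first.
  by rewrite /sumI -big_scal; apply: eq_bigr => i _; exact: blocknorm2_scale.
rewrite sqrt_mult_alt; last nra.
by rewrite -sqrt_Rsqr_abs.
Qed.

Lemma normL_sq (Lam : 'I_N -> R) (d : V) : (forall i, 0 < Lam i) ->
  normL Lam d * normL Lam d = sumI (fun i => Lam i * blocknorm2 d i).
Proof.
move=> HL; rewrite /normL sqrt_sqrt //; apply: sumI_ge0 => k.
by have := HL k; have := blocknorm2_ge0 d k; nra.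
Qed.

Lemma dnormL_Dmul (Lam : 'I_N -> R) (d : V) : (forall i, 0 < Lam i) ->
  dnormL Lam (Dmul Lam d) * dnormL Lam (Dmul Lam d) = normL Lam d * normL Lam d.
Proof.
move=> HL; rewrite normL_sq // /dnormL sqrt_sqrt; last first.
  apply: sumI_ge0 => k; apply: Rmult_le_pos; last exact: blocknorm2_ge0.
  exact/Rlt_le/Rinv_0_lt_compat.
apply: eq_bigr => k _; rewrite (_ : blocknorm2 _ k = Lam k * Lam k * blocknorm2 d k).
  by field; have := HL k; lra.
by rewrite /blocknorm2 /sumI -big_scal; apply: eq_bigr => l _; rewrite /Dmul; ring.
Qed.
Lemma inner_bscale (u d : V) tau :
  inner u (bscale tau d) = sumI (fun k => tau k * binner u d k).
Proof.
apply: eq_bigr => k _; rewrite /binner /sumI -big_scal.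
by apply: eq_bigr => l _; rewrite /bscale; ring.
Qed.

Lemma inner_young (u s : V) i j m : supported2 i j s -> 0 < m ->
  inner u s <= pairnorm2 i j u / (2 * m) + m / 2 * pairnorm2 i j s.
Proof.
move=> Hs Hm; rewrite /pairnorm2 -sumI_divr /sumI -big_scal -big_split.
apply: big_le => k _; case: ifP => Hk /=; last first.
  apply: Req_le; rewrite /Rdiv Rmult_0_l Rmult_0_r Rplus_0_r.
  by apply: big1 => l _; rewrite Hs ?Hk //; ring.
rewrite /blocknorm2 -sumI_divr /sumI -big_scal -big_split; apply: big_le => l _ /=.
have Hsq := Rle_0_sqr (u k l - m * s k l).
have -> : u k l * u k l / (2 * m) + m / 2 * (s k l * s k l) =
          u k l * s k l + Rsqr (u k l - m * s k l) / (2 * m).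
  by rewrite /Rsqr; field; lra.
suff : 0 <= Rsqr (u k l - m * s k l) / (2 * m) by lra.
by apply: Rmult_le_pos => //; apply/Rlt_le/Rinv_0_lt_compat; lra.
Qed.
End BlockVectors.

Section Descent.
Variables (N : nat) (ns : 'I_N -> nat).
Local Notation V := (vec ns).
Variables (f : V -> R) (g : V -> V) (L : 'I_N -> 'I_N -> R).
Hypothesis Hgrad : is_gradient f g.
Hypothesis HLpos : forall i j, 0 < L i j.
Hypothesis HLip : forall (i j : 'I_N) (x s : V), supported2 i j s ->
  sqrt (pairnorm2 i j (vsub (g (vadd x s)) (g x))) <= L i j * sqrt (pairnorm2 i j s).

Lemma line_derivative (x s : V) t :
  derivable_pt_lim (fun t => f (vadd x (scale t s))) t (inner (g (vadd x (scale t s))) s).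
Proof.
move=> eps He; set y := vadd x (scale t s); set n := enorm s.
have Hn : 0 <= n by apply: sqrt_pos.
have He' : 0 < eps / 2 / (n + 1) by apply: Rdiv_lt_0_compat; lra.
have [d [Hd Hy]] := Hgrad y He'.
have Hd' : 0 < d / (n + 1) by apply: Rdiv_lt_0_compat; lra.
exists (mkposreal _ Hd') => hr Hh0 /= Hh.
have Habs : 0 < Rabs hr by apply: Rabs_pos_lt.
have Hsmall : enorm (scale hr s) < d.
  rewrite enorm_scale -/n.
  suff : Rabs hr * (n + 1) < d by nra.
  have := Rmult_lt_compat_r (n + 1) _ _ ltac:(lra) Hh.
  by rewrite /Rdiv Rmult_assoc Rinv_l ?Rmult_1_r; lra.
have := Hy _ Hsmall.
have -> : vadd y (scale hr s) = vadd x (scale (t + hr) s).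
  by apply: vec_ext => i l; rewrite /y /vadd /scale /bscale; ring.
rewrite inner_scale enorm_scale -/n.
set D := f (vadd x (scale (t + hr) s)) - f y - hr * inner (g y) s => HD.
have -> : (f (vadd x (scale (t + hr) s)) - f y) / hr - inner (g y) s = D / hr.
  by rewrite /D; field.
rewrite /Rdiv Rabs_mult Rabs_inv -/(Rdiv _ _).
apply: (Rle_lt_trans _ (eps / 2 / (n + 1) * n)).
  apply: (Rmult_le_reg_r (Rabs hr)) => //.
  by rewrite /Rdiv Rmult_assoc Rinv_l; [move: HD; rewrite /Rdiv; nra | lra].
have Hk : / (n + 1) * (n + 1) = 1 by rewrite Rinv_l; lra.
have Hk0 : 0 < / (n + 1) by apply: Rinv_0_lt_compat; lra.
rewrite /Rdiv; nra.
Qed.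

Lemma gradient_increment x s i j c : supported2 i j s -> 0 < c ->
  inner (vsub (g (vadd x (scale c s))) (g x)) s <= c * L i j * pairnorm2 i j s.
Proof.
move=> Hs Hc.
have Hcs : supported2 i j (scale c s) by move=> k Hk l; rewrite /scale /bscale Hs //; ring.
have Hlip := HLip x Hcs.
rewrite pairnorm2_scale sqrt_mult_alt ?sqrt_square in Hlip; [|lra|nra].
set u := vsub _ _ in Hlip *; set m := c * L i j.
have Hm : 0 < m by apply: Rmult_lt_0_compat.
have Hu := pairnorm2_ge0 u i j; have Hps := pairnorm2_ge0 s i j.
have Hu2 : pairnorm2 i j u <= m * m * pairnorm2 i j s.
  rewrite -(sqrt_sqrt (pairnorm2 i j u)) // -(sqrt_sqrt (pairnorm2 i j s)) //.
  by have := sqrt_pos (pairnorm2 i j u); have := sqrt_pos (pairnorm2 i j s); rewrite /m; nra.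
have Hy := inner_young u Hs Hm.
suff : pairnorm2 i j u / (2 * m) <= m / 2 * pairnorm2 i j s by lra.
apply: (Rmult_le_reg_r (2 * m)); first lra.
by rewrite /Rdiv Rmult_assoc Rinv_l; nra.
Qed.

(* f(x + s) <= f(x) + <g x, s> + L_ij/2 ||s_ij||^2 for s supported on i, j:
   psi(t) = f(x + t s) - <g x, s> t - C t^2 with C = L_ij/2 ||s_ij||^2 has,
   by the previous lemma, a nonpositive derivative on (0,1). *)
Lemma descent x i j s : supported2 i j s ->
  f (vadd x s) <= f x + inner (g x) s + L i j / 2 * pairnorm2 i j s.
Proof.
move=> Hs; set K := inner (g x) s; set C := L i j / 2 * pairnorm2 i j s.
pose psi t := f (vadd x (scale t s)) - K * t - C * (t * t).
have Hpsi t : derivable_pt_lim psi t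
    (inner (g (vadd x (scale t s))) s - K * 1 - C * (1 * t + t * 1)).
  apply: derivable_pt_lim_minus; first apply: derivable_pt_lim_minus.
  - exact: line_derivative.
  - exact: (derivable_pt_lim_scal id K t 1 (derivable_pt_lim_id t)).
  apply: (derivable_pt_lim_scal (mult_fct id id) C t).
  exact: derivable_pt_lim_mult (derivable_pt_lim_id t) (derivable_pt_lim_id t).
pose pr : derivable psi := fun t => exist _ _ (Hpsi t).
have [c [Hmvt Hc]] := MVT_cor1 psi 0 1 pr ltac:(lra).
move: Hmvt; rewrite /pr /psi /=.
have -> : vadd x (scale 1 s) = vadd x s by apply: vec_ext => k l; rewrite /vadd /scale /bscale; ring.
have -> : vadd x (scale 0 s) = x by apply: vec_ext => k l; rewrite /vadd /scale /bscale; ring.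
have := gradient_increment x Hs (proj1 Hc); rewrite inner_vsub -/K /C => Hinc.
nra.
Qed.
End Descent.

Section SeparableConvex.
Variables (N : nat) (ns : 'I_N -> nat).
Local Notation V := (vec ns).
Variables (h : V -> R) (hh : forall i : 'I_N, 'I_(ns i) -> R -> R).
Arguments hh : clear implicits.
Hypothesis Hh : forall x, h x = sumI (fun i => sumI (fun l : 'I_(ns i) => hh i l (x i l))).
Hypothesis Hhconv : forall i l, convexR (hh i l).

Definition hdiff (x d : V) (k : 'I_N) : R :=
  sumI (fun l : 'I_(ns k) => hh k l (x k l + d k l) - hh k l (x k l)).

Lemma h_increment (x d : V) : h (vadd x d) - h x = sumI (hdiff x d).
Proof.
rewrite !Hh /sumI -big_sub; apply: eq_bigr => k _.
by rewrite -big_sub; apply: eq_bigr.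
Qed.

Lemma convex_step (phi : R -> R) t u v : convexR phi -> 0 <= t <= 1 ->
  phi (v + t * u) <= phi v + t * (phi (v + u) - phi v).
Proof.
move=> Hphi Ht; have := Hphi (v + u) v t Ht.
by rewrite (_ : t * (v + u) + (1 - t) * v = v + t * u); [lra | ring].
Qed.

Lemma h_bscale (x d : V) tau : (forall k, 0 <= tau k <= 1) ->
  h (vadd x (bscale tau d)) <= h x + sumI (fun k => tau k * hdiff x d k).
Proof.
move=> Htau; rewrite !Hh /sumI -big_split; apply: big_le => k _ /=.
rewrite /hdiff /sumI -big_scal -big_split; apply: big_le => l _ /=.
exact: convex_step.
Qed.
End SeparableConvex.

(* Optimality of d_Lambda(x): comparing d with the feasible t d, 0 <= t < 1. *)
Lemma direction_optimality N (ns : 'I_N -> nat) (f h : vec ns -> R) (g : vec ns -> vec ns)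
  (hh : forall i : 'I_N, 'I_(ns i) -> R -> R) (a : vec ns) (Lam : 'I_N -> R)
  (Hh : forall x, h x = sumI (fun i => sumI (fun l : 'I_(ns i) => hh i l (x i l))))
  (Hhconv : forall i l, convexR (hh i l)) (HL : forall i, 0 < Lam i) x d t :
  IsArgmin (fun s => inner a s = 0) (dL_obj f h g Lam x) d -> 0 <= t < 1 ->
  inner (g x) d + (h (vadd x d) - h x) <= - ((1 + t) / 2) * (normL Lam d * normL Lam d).
Proof.
move=> [Hd Hmin] Ht.
have Hfeas : inner a (scale t d) = 0 by rewrite inner_scale Hd; ring.
have := Hmin _ Hfeas; rewrite /dL_obj !normL_sq // inner_scale.
rewrite (_ : sumI (fun i => Lam i * blocknorm2 (scale t d) i) =
             t * t * sumI (fun i => Lam i * blocknorm2 d i)); last first.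
  by rewrite /sumI -big_scal; apply: eq_bigr => i _; rewrite blocknorm2_scale; ring.
have Hconv := h_bscale Hh Hhconv x d (tau := fun _ => t) ltac:(move=> k /=; lra).
change (bscale (fun _ => t) d) with (scale t d) in Hconv.
rewrite /sumI big_scal -/(sumI (hdiff hh x d)) -(h_increment Hh) in Hconv.
set q := sumI _; set A := inner (g x) d + (h (vadd x d) - h x) => Hopt.
have Hpos : 0 < 1 - t by lra.
have : (1 - t) * (A + (1 + t) / 2 * q) <= 0 by rewrite /A; nra.
nra.
Qed.

Lemma INR_ge2 N : (2 <= N)%N -> 2 <= INR N.
Proof. by move=> /leP H; have := le_INR _ _ H. Qed.

Lemma Rdiv_ge0 u v : 0 <= u -> 0 < v -> 0 <= u / v.
Proof. by move=> Hu Hv; apply: Rmult_le_pos => //; apply/Rlt_le/Rinv_0_lt_compat. Qed.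

Lemma Rmax_pos_neg u : Rmax u 0 - Rmax (- u) 0 = u.
Proof. by rewrite /Rmax; do 2 case: Rle_dec => ? /=; lra. Qed.

(* Splitting a zero-sum vector w = (w_k) along pairs: weights lam_ij in [0,1]
   with w_i lam_ij + w_j lam_ji = 0 and sum_{j <> i} lam_ij = 1.  A positive
   w_i is balanced against the negative parts w_j^- in proportion to their
   mass W = sum_k w_k^+ = sum_k w_k^-, and symmetrically; a zero w_i is
   spread evenly. *)
Section PairWeights.
Variables (N : nat) (w : 'I_N -> R).
Hypothesis HN : (2 <= N)%N.
Hypothesis Hw : sumI w = 0.

Definition posmass : R := sumI (fun k => Rmax (w k) 0).

Definition lam (i j : 'I_N) : R :=
  if Req_dec_T (w i) 0 then / (INR N - 1)
  else if Rlt_dec 0 (w i) then Rmax (- w j) 0 / posmass else Rmax (w j) 0 / posmass.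

Lemma negmass : sumI (fun k => Rmax (- w k) 0) = posmass.
Proof.
suff : posmass - sumI (fun k => Rmax (- w k) 0) = sumI w by rewrite Hw; lra.
by rewrite /posmass /sumI -big_sub; apply: eq_bigr => k _; rewrite Rmax_pos_neg.
Qed.

Lemma posmass_ge_pos k : Rmax (w k) 0 <= posmass.
Proof. by apply: sumI_ge_term => j; apply: Rmax_r. Qed.

Lemma posmass_ge_neg k : Rmax (- w k) 0 <= posmass.
Proof. by rewrite -negmass; apply: sumI_ge_term => j; apply: Rmax_r. Qed.

Lemma posmass_gt0 i : w i <> 0 -> 0 < posmass.
Proof.
move=> H; case: (Rlt_dec 0 (w i)) => H1.
- by have := posmass_ge_pos i; have := Rmax_l (w i) 0; lra.
- by have := posmass_ge_neg i; have := Rmax_l (- w i) 0; lra.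
Qed.

Lemma lam_unit i j : 0 <= lam i j <= 1.
Proof.
have HN2 := INR_ge2 HN.
rewrite /lam; case: Req_dec_T => H.
  split; first by apply/Rlt_le/Rinv_0_lt_compat; lra.
  by rewrite -Rinv_1; apply: Rinv_le_contravar; lra.
have HW := posmass_gt0 H.
case: Rlt_dec => Hsign; split; try (apply: Rdiv_ge0 => //; exact: Rmax_r);
  [have := posmass_ge_neg j | have := posmass_ge_pos j] => Hj;
  apply: (Rmult_le_reg_r posmass) => //; rewrite /Rdiv Rmult_assoc Rinv_l; lra.
Qed.

Lemma lam_balanced i j : w i * lam i j + w j * lam j i = 0.
Proof.
rewrite /lam.
case: (Req_dec_T (w i) 0) => Hi; case: (Req_dec_T (w j) 0) => Hj /=.
- by rewrite Hi Hj; ring.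
- by rewrite Hi Ropp_0 /Rmax; case: Rlt_dec => ? /=; case: Rle_dec => ? /=; rewrite /Rdiv; ring.
- by rewrite Hj Ropp_0 /Rmax; case: Rlt_dec => ? /=; case: Rle_dec => ? /=; rewrite /Rdiv; ring.
have HW : posmass <> 0 by have := posmass_gt0 Hi; lra.
rewrite /Rmax; case: Rlt_dec => ? /=; case: Rlt_dec => ? /=;
  do 2 case: Rle_dec => ? /=; first [exfalso; lra | field; exact: HW].
Qed.

Lemma lam_row_sum i : sumI (fun j => if i == j then 0 else lam i j) = 1.
Proof.
have HN2 := INR_ge2 HN.
rewrite sumI_but /lam; case: Req_dec_T => H /=.
  by rewrite sumI_const; field; lra.
have HW := posmass_gt0 H.
case: Rlt_dec => H1 /=; rewrite sumI_divr.
- by rewrite negmass Rmax_right; [field | ]; lra.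
- by rewrite -/posmass Rmax_right; [field | ]; lra.
Qed.
End PairWeights.

Section PairDirection.
Variables (N : nat) (ns : 'I_N -> nat).
Local Notation V := (vec ns).
Variables (lm : 'I_N -> 'I_N -> R) (i j : 'I_N).
Hypothesis Hij : i != j.

Definition pair_weights (k : 'I_N) : R :=
  if k == i then lm i j else if k == j then lm j i else 0.

Definition pair_dir (d : V) : V := bscale pair_weights d.

Lemma pair_weights_sum (F : 'I_N -> R) :
  sumI (fun k => pair_weights k * F k) = lm i j * F i + lm j i * F j.
Proof.
rewrite -(sumI_two (fun k => lm i j * F k) (fun k => lm j i * F k) Hij).
by apply: eq_bigr => k _; rewrite /pair_weights; case: (k == i); case: (k == j); ring.
Qed.

Lemma pair_weights_unit : (forall p q, 0 <= lm p q <= 1) -> forall k, 0 <= pair_weights k <= 1.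
Proof. by move=> Hlm k; rewrite /pair_weights; case: (k == i); case: (k == j) => //; lra. Qed.

Lemma pair_dir_supported (d : V) : supported2 i j (pair_dir d).
Proof.
move=> k Hk l; rewrite /pair_dir /bscale /pair_weights.
by move/norP: Hk => [/negbTE -> /negbTE ->]; ring.
Qed.

Lemma inner_pair_dir (u d : V) :
  inner u (pair_dir d) = lm i j * binner u d i + lm j i * binner u d j.
Proof. by rewrite inner_bscale pair_weights_sum. Qed.

Lemma pairnorm2_pair_dir (d : V) : pairnorm2 i j (pair_dir d) =
  lm i j * lm i j * blocknorm2 d i + lm j i * lm j i * blocknorm2 d j.
Proof.
rewrite -(sumI_two (fun k => lm i j * lm i j * blocknorm2 d k)
                   (fun k => lm j i * lm j i * blocknorm2 d k) Hij).
apply: eq_bigr => k _; rewrite /pair_dir blocknorm2_bscale.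
by rewrite /pair_weights; case: (k == i); case: (k == j) => /=; ring.
Qed.
End PairDirection.

Lemma upairs_neq N (p : 'I_N * 'I_N) : p \in upairs N -> p.1 != p.2.
Proof.
case/allpairsPdep => i [j [_ Hj ->]] /=.
by move: Hj; rewrite mem_filter => /andP [H _]; rewrite neq_ltn H.
Qed.

Lemma big_enum_ord N (F : 'I_N -> R) (P : pred 'I_N) :
  \big[Rplus/0]_(i <- enum 'I_N | P i) F i = \big[Rplus/0]_(i < N | P i) F i.
Proof. by rewrite big_enum_cond; apply: eq_bigl => i. Qed.

Lemma sum_upairs N (U : 'I_N -> 'I_N -> R) :
  sumS (upairs N) (fun p => U p.1 p.2 + U p.2 p.1) =
  sumI (fun i => sumI (fun j => if i == j then 0 else U i j)).
Proof.
rewrite /sumS /upairs big_allpairs_dep /=.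
under eq_bigr do rewrite big_filter big_enum_ord big_split.
rewrite (big_enum_ord _ predT) big_split /=.
rewrite [X in _ + X](eq_bigr (fun i : 'I_N => \big[Rplus/0]_(j < N) (if (i < j)%N then U j i else 0)));
  last by move=> i _; rewrite big_mkcond.
rewrite exchange_big /= /sumI -big_split; apply: eq_bigr => i _.
rewrite big_mkcond -big_split; apply: eq_bigr => j _ /=.
case: ltngtP => [Hij|Hij|Hij].
- by rewrite ifN ?(ltn_eqF Hij) //; first ring; rewrite neq_ltn Hij.
- by rewrite ifN; first ring; rewrite neq_ltn Hij orbT.
- by rewrite (_ : i == j) //; first ring; apply/eqP/val_inj.
Qed.

Lemma size_upairs N : INR (size (upairs N)) = INR N * (INR N - 1) / 2.
Proof.
have := sum_upairs (fun _ _ : 'I_N => / 2).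
rewrite /sumS (eq_bigr (fun _ => 1)) ?big_cst ?Rmult_1_r => [->|]; last by move=> p _; field.
transitivity (sumI (fun _ : 'I_N => INR N * / 2 - / 2)).
  by apply: eq_bigr => i _; rewrite sumI_but sumI_const.
by rewrite sumI_const; field.
Qed.

(* Uniform average over a finite list (empty lists average to 0). *)
Definition avg {T : Type} (ps : seq T) (X : T -> R) : R := / INR (size ps) * sumS ps X.

Lemma avg_le {T : eqType} (ps : seq T) (X Y : T -> R) :
  (forall p, p \in ps -> X p <= Y p) -> avg ps X <= avg ps Y.
Proof.
move=> H; apply: Rmult_le_compat_l.
  by case: (size ps) => [|n]; [rewrite Rinv_0; lra | apply/Rlt_le/Rinv_0_lt_compat/lt_0_INR/ltP].
by rewrite /sumS big_seq [in X in _ <= X]big_seq; apply: big_le.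
Qed.

Lemma avg_scal_sub {T : Type} (ps : seq T) c (X Y : T -> R) :
  avg ps (fun p => c * (X p - Y p)) = c * (avg ps X - avg ps Y).
Proof. by rewrite /avg /sumS big_scal big_sub; ring. Qed.

Lemma avg_const {T : Type} (ps : seq T) m : (0 < size ps)%N -> avg ps (fun _ => m) = m.
Proof.
move=> Hps; rewrite /avg /sumS big_cst; field.
by apply: not_0_INR; case: (size ps) Hps.
Qed.

Lemma Gam_pos N (L : 'I_N -> 'I_N -> R) : (2 <= N)%N -> (forall i j, 0 < L i j) ->
  forall i, 0 < Gam L i.
Proof.
move=> HN HLpos i; have HN2 := INR_ge2 HN.
rewrite /Gam; apply: Rmult_lt_0_compat; first by apply: Rinv_0_lt_compat; lra.
by apply: (Rlt_le_trans _ (L i i)) => //; apply: sumI_ge_term => k; exact: Rlt_le.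
Qed.

Lemma NGam_row_sum N (L : 'I_N -> 'I_N -> R) : (2 <= N)%N ->
  forall i, INR N * Gam L i = sumI (fun j => L i j).
Proof. by move=> HN i; have := INR_ge2 HN; rewrite /Gam => ?; field; lra. Qed.

Section OneStep.
Variables (N : nat) (ns : 'I_N -> nat).
Local Notation V := (vec ns).
Variables (f h : V -> R) (g : V -> V) (hh : forall i : 'I_N, 'I_(ns i) -> R -> R).
Arguments hh : clear implicits.
Variables (a : V) (L : 'I_N -> 'I_N -> R) (dp : V -> 'I_N -> 'I_N -> V) (dN : V -> V).
Hypothesis HN : (2 <= N)%N.
Hypothesis Hgrad : is_gradient f g.
Hypothesis HLpos : forall i j, 0 < L i j.
Hypothesis HLsym : forall i j, L i j = L j i.
Hypothesis HLip : forall (i j : 'I_N) (x s : V), supported2 i j s ->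
  sqrt (pairnorm2 i j (vsub (g (vadd x s)) (g x))) <= L i j * sqrt (pairnorm2 i j s).
Hypothesis Hh : forall x, h x = sumI (fun i => sumI (fun l : 'I_(ns i) => hh i l (x i l))).
Hypothesis Hhconv : forall i l, convexR (hh i l).
Hypothesis Hdp : forall x (i j : 'I_N), i <> j ->
  IsArgmin (rcd_feas a i j) (rcd_obj f h g L x i j) (dp x i j).
Hypothesis HdN : forall x, IsArgmin (fun s => inner a s = 0)
  (dL_obj f h g (fun i => INR N * Gam L i) x) (dN x).

(* Pair weights splitting d = d_{N Gamma}(x) into feasible pair directions. *)
Definition split_weights (x : V) : 'I_N -> 'I_N -> R := lam (binner a (dN x)).

Lemma split_weights_unit x p q : 0 <= split_weights x p q <= 1.
Proof. by apply: lam_unit => //; case: (HdN x). Qed.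

Lemma split_weights_feasible x i j : i != j -> rcd_feas a i j (pair_dir (split_weights x) i j (dN x)).
Proof.
move=> Hij; split; first exact: pair_dir_supported.
have [Hw _] := HdN x.
have := lam_balanced (w := binner a (dN x)) Hw i j.
by rewrite inner_pair_dir // /split_weights; lra.
Qed.

Definition pair_gain (x : V) (i j : 'I_N) : R :=
  let lm := split_weights x i j in
  lm * (binner (g x) (dN x) i + hdiff hh x (dN x) i) + L i j / 2 * (lm * lm) * blocknorm2 (dN x) i.

(* The step of 2-RCD on (i, j) does at least as well as the pair direction. *)
Lemma pair_bound x i j : i != j ->
  f (rcd_step dp x (i, j)) + h (rcd_step dp x (i, j)) <= f x + h x + (pair_gain x i j + pair_gain x j i).
Proof.
move=> Hij; have [[Hsupp _] Hmin] := Hdp x (elimN eqP Hij).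
have Hdes := descent Hgrad HLpos HLip x Hsupp.
have := Hmin _ (split_weights_feasible x Hij).
rewrite /rcd_obj inner_pair_dir // pairnorm2_pair_dir // => Hobj.
have := h_bscale Hh Hhconv x (dN x) (pair_weights_unit i j (@split_weights_unit x)).
rewrite -/(pair_dir _ i j _) pair_weights_sum // => Hhb.
move: Hdes Hobj Hhb; rewrite /rcd_step /pair_gain /= (HLsym j i).
set l1 := split_weights x i j; set l2 := split_weights x j i; lra.
Qed.

Lemma row_bound x i : sumI (fun j => if i == j then 0 else pair_gain x i j) <=
  binner (g x) (dN x) i + hdiff hh x (dN x) i + / 2 * (INR N * Gam L i) * blocknorm2 (dN x) i.
Proof.
set c := binner _ _ i + hdiff _ _ _ i; set B := blocknorm2 (dN x) i.
have HB : 0 <= B by exact: blocknorm2_ge0.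
rewrite (_ : sumI _ = c * sumI (fun j => if i == j then 0 else split_weights x i j) +
    sumI (fun j => if i == j then 0 else L i j / 2 * (split_weights x i j)^2 * B)); last first.
  rewrite /sumI -big_scal -big_split; apply: eq_bigr => j _.
  by case: ifP => _; rewrite /pair_gain /c /B /=; ring.
rewrite lam_row_sum //; last by case: (HdN x).
rewrite Rmult_1_r NGam_row_sum //; apply: Rplus_le_compat_l.
rewrite (_ : / 2 * _ * B = / 2 * B * sumI (fun j => L i j)); last ring.
rewrite /sumI -big_scal; apply: big_le => j _.
have HL := HLpos i j; have [H0 H1] := split_weights_unit x i j.
have Hsq : 0 <= (split_weights x i j)^2 <= 1 by split; nra.
case: ifP => _; first by apply: Rmult_le_pos; [apply: Rmult_le_pos|]; lra.
have HLB := Rmult_le_pos _ _ (Rlt_le _ _ HL) HB.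
move: Hsq; set sq := _ ^ 2; rewrite /Rdiv; nra.
Qed.

(* Averaging the pair bounds over the N(N-1)/2 pairs: the gains recombine
   into the objective of the problem defining d = d_{N Gamma}(x). *)
Lemma pairs_sum_bound x :
  sumS (upairs N) (fun p => f (rcd_step dp x p) + h (rcd_step dp x p)) <=
  INR (size (upairs N)) * (f x + h x) + (inner (g x) (dN x) + (h (vadd x (dN x)) - h x))
  + / 2 * (normL (fun i => INR N * Gam L i) (dN x) * normL (fun i => INR N * Gam L i) (dN x)).
Proof.
have HNGam i : 0 < INR N * Gam L i.
  by apply: Rmult_lt_0_compat; [have := INR_ge2 HN; lra | exact: Gam_pos].
set rows := sumI (fun i => binner (g x) (dN x) i + hdiff hh x (dN x) i +
                            / 2 * (INR N * Gam L i) * blocknorm2 (dN x) i).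
have Hrows : rows = inner (g x) (dN x) + (h (vadd x (dN x)) - h x) +
    / 2 * (normL (fun i => INR N * Gam L i) (dN x) * normL (fun i => INR N * Gam L i) (dN x)).
  rewrite (h_increment Hh) normL_sq // /rows /sumI !big_split -big_scal /=.
  by congr (_ + _ + _); apply: eq_bigr => i _; ring.
have Hgains : sumI (fun i => sumI (fun j => if i == j then 0 else pair_gain x i j)) <= rows.
  by apply: big_le => i _; exact: row_bound.
apply: (Rle_trans _ (sumS (upairs N) (fun p => f x + h x + (pair_gain x p.1 p.2 + pair_gain x p.2 p.1)))).
  rewrite /sumS big_seq [in X in _ <= X]big_seq; apply: big_le => -[i j] /upairs_neq.
  exact: pair_bound.
rewrite /sumS big_split big_cst -/(sumS _ _) sum_upairs /=.
lra.
Qed.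

Lemma rcd_step_feasible b x p : p \in upairs N -> inner a x = b -> inner a (rcd_step dp x p) = b.
Proof.
move=> /upairs_neq /eqP Hp Hx; have [[_ Hd] _] := Hdp x Hp.
by rewrite /rcd_step inner_vadd Hx Hd Rplus_0_r.
Qed.

Definition M2sq (x : V) : R :=
  dnormL (Gam L) (Dmul (Gam L) (dN x)) * dnormL (Gam L) (Dmul (Gam L) (dN x)).

Lemma one_step x :
  M2sq x <= INR N * (f x + h x - avg (upairs N) (fun p => f (rcd_step dp x p) + h (rcd_step dp x p))).
Proof.
have HN2 := INR_ge2 HN; have HGam := Gam_pos HN HLpos.
have HNGam i : 0 < INR N * Gam L i by apply: Rmult_lt_0_compat; [lra | exact: HGam].
set t := (INR N - 1) / INR N.
have Ht : 0 <= t < 1.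
  split; first by apply: Rdiv_ge0; lra.
  by apply: (Rmult_lt_reg_r (INR N)); [lra | rewrite /t /Rdiv Rmult_assoc Rinv_l; lra].
have Hopt := direction_optimality Hh Hhconv HNGam (HdN x) Ht.
have Hsum := pairs_sum_bound x.
have HM : M2sq x = normL (fun i => INR N * Gam L i) (dN x) * normL (fun i => INR N * Gam L i) (dN x) / INR N.
  rewrite /M2sq dnormL_Dmul // !normL_sq // -sumI_divr.
  by apply: eq_bigr => i _; field; lra.
rewrite /avg HM size_upairs in Hsum *.
move: Hopt Hsum; set q := normL _ _ * _; set S := sumS _ _.
set P := INR N * (INR N - 1) / 2 => Hopt Hsum.
have HP : 0 < P by rewrite /P; apply: Rdiv_lt_0_compat; nra.
have -> : q / INR N = INR N * (t / 2 * q / P) by rewrite /t /P; field; lra.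
apply: Rmult_le_compat_l; first lra.
suff : / P * S <= f x + h x - t / 2 * q / P by lra.
apply: (Rmult_le_reg_l P) => //; rewrite -Rmult_assoc Rinv_r; last lra.
rewrite Rmult_1_l (_ : P * _ = P * (f x + h x) - t / 2 * q); first nra.
by field; lra.
Qed.
End OneStep.

Section Trajectories.
Variables (N : nat) (ns : 'I_N -> nat).
Local Notation V := (vec ns).
Variables (dp : V -> 'I_N -> 'I_N -> V) (ps : seq ('I_N * 'I_N)) (Phi : V -> R).

Lemma expect_decrease (M : V -> R) c :
  (forall x, M x <= c * (Phi x - avg ps (fun p => Phi (rcd_step dp x p)))) ->
  forall l x, Expect ps l (fun s => M (rcd_run dp x s)) <=
    c * Expect ps l (fun s => Phi (rcd_run dp x s)) - c * Expect ps l.+1 (fun s => Phi (rcd_run dp x s)).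
Proof.
move=> Hstep l x; rewrite -Rmult_minus_distr_l.
elim: l x => [|l IH] x; first exact: Hstep.
change (avg ps (fun p => Expect ps l (fun s => M (rcd_run dp (rcd_step dp x p) s))) <=
  c * (avg ps (fun p => Expect ps l (fun s => Phi (rcd_run dp (rcd_step dp x p) s))) -
       avg ps (fun p => Expect ps l.+1 (fun s => Phi (rcd_run dp (rcd_step dp x p) s))))).
by rewrite -avg_scal_sub; apply: avg_le => p _; exact: IH.
Qed.

Lemma expect_lower (S : V -> Prop) m : (0 < size ps)%N ->
  (forall x p, p \in ps -> S x -> S (rcd_step dp x p)) -> (forall x, S x -> m <= Phi x) ->
  forall l x, S x -> m <= Expect ps l (fun s => Phi (rcd_run dp x s)).
Proof.
move=> Hps HS Hm; elim=> [|l IH] x Hx; first exact: Hm.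
change (m <= avg ps (fun p => Expect ps l (fun s => Phi (rcd_run dp (rcd_step dp x p) s)))).
by rewrite -(avg_const m Hps); apply: avg_le => p Hp; apply: IH; exact: HS.
Qed.
End Trajectories.

Lemma min_upto_telescope (u phi : nat -> R) : (forall l, u l <= phi l - phi l.+1) ->
  forall k, min_upto k u <= (phi 0%N - phi k.+1) / INR (k + 1).
Proof.
move=> Hu k; have Hk : 0 < INR (k + 1) by apply/lt_0_INR/ltP; rewrite addn1.
apply: (Rmult_le_reg_r (INR (k + 1))) => //.
rewrite /Rdiv Rmult_assoc Rinv_l ?Rmult_1_r; last lra.
elim: k {Hk} => [|k IH]; first by have := Hu 0%N; rewrite /= Rmult_1_r.
change (min_upto k.+1 u) with (Rmin (min_upto k u) (u k.+1)).
rewrite (_ : INR (k.+1 + 1) = INR (k + 1) + 1); last by rewrite !addn1 S_INR.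
have Hm := Rmult_le_compat_r _ _ _ (pos_INR (k + 1)) (Rmin_l (min_upto k u) (u k.+1)).
have := Rmin_r (min_upto k u) (u k.+1); have := Hu k.+1; lra.
Qed.

Unset Implicit Arguments.

Theorem theorem4
  (N : nat) (ns : 'I_N -> nat)
  (HN : (2 <= N)%N) (Hns : forall i, (0 < ns i)%N)
  (f : vec ns -> R) (g : vec ns -> vec ns)
  (h : vec ns -> R) (hh : forall i : 'I_N, 'I_(ns i) -> R -> R)
  (a : vec ns) (b : R) (L : 'I_N -> 'I_N -> R) (Fstar : R)
  (dp : vec ns -> 'I_N -> 'I_N -> vec ns) (dN : vec ns -> vec ns) (x0 : vec ns)
  (* a nonzero *)
  (Ha : exists i l, a i l <> 0)
  (* Assumption A2 (i) *)
  (Hgrad : is_gradient f g)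
  (HLpos : forall i j, 0 < L i j) (HLsym : forall i j, L i j = L j i)
  (HLip : forall (i j : 'I_N) (x s : vec ns), supported2 i j s ->
     sqrt (pairnorm2 i j (vsub (g (vadd x s)) (g x))) <= L i j * sqrt (pairnorm2 i j s))
  (* Assumption A2 (ii) *)
  (Hh : forall x, h x = sumI (fun i => sumI (fun l : 'I_(ns i) => hh i l (x i l))))
  (Hhconv : forall i l, convexR (hh i l))
  (* F^* = inf {F x : a^T x = b} is finite *)
  (HFlb : forall x, inner a x = b -> Fstar <= f x + h x)
  (HFglb : forall y, (forall x, inner a x = b -> y <= f x + h x) -> y <= Fstar)
  (* dp x i j is the direction d_{ij} computed by 2-RCD at x *)
  (Hdp : forall x (i j : 'I_N), i <> j ->
     IsArgmin (rcd_feas a i j) (rcd_obj f h g L x i j) (dp x i j))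
  (* dN x = d_{N Gamma}(x) *)
  (HdN : forall x, IsArgmin (fun s => inner a s = 0)
     (dL_obj f h g (fun i => INR N * Gam L i) x) (dN x))
  (Hx0 : inner a x0 = b) :
  forall k : nat,
    min_upto k (fun l => Expect (upairs N) l (fun s =>
       let M2 := dnormL (Gam L) (Dmul (Gam L) (dN (rcd_run dp x0 s))) in M2 * M2))
    <= INR N * (f x0 + h x0 - Fstar) / INR (k + 1).
Proof.
move=> k; pose F x := f x + h x.
have HN2 := INR_ge2 HN.
have Hps : (0 < size (upairs N))%N.
  by move: (size_upairs N); case: (size _) => [|n] //= Hsize; nra.
have Hdec := expect_decrease (one_step HN Hgrad HLpos HLsym HLip Hh Hhconv Hdp HdN).
have Hlow := expect_lower Hps (rcd_step_feasible Hdp (b := b)) HFlb.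
apply: (Rle_trans _ _ _ (min_upto_telescope
  (phi := fun l => INR N * Expect (upairs N) l (fun s => F (rcd_run dp x0 s))) (fun l => Hdec l x0) k)).
apply: Rmult_le_compat_r; first by apply/Rlt_le/Rinv_0_lt_compat/lt_0_INR/ltP; rewrite addn1.
have := Rmult_le_compat_l _ _ _ (pos_INR N) (Hlow k.+1 x0 Hx0).
rewrite /= /F; lra.
Qed.
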